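(* Let $(X,Y,R)$ be a random triple with $X\in\mathbb{R}^d$, $Y\in\{0,1\}$, $R\in\{0,1\}$, $0<P(R=1)<1$, such that all conditional probabilities $P(R=r\mid Y=y,X=x)$ and $P(Y=y\mid R=r,X=x)$ are well defined and in $(0,1)$. Let $T:\mathbb{R}^d\to\mathbb{R}^k$ be measurable, $\theta^\star=(\alpha_0^\star,\alpha_1^\star,\beta_0^\star,\beta_1^\star)$, $\omega(x,y;\theta^\star)=\exp(\alpha_y^\star+{\beta_y^\star}^\top T(x))$, $\eta_r(x,y;\theta^\star)=P(R=1)/\{P(R=1)+\omega(x,y;\theta^\star)P(R=0)\}$ and $\gamma(1\mid x;\theta^\star)=(\alpha_1^\star-\alpha_0^\star)+(\beta_1^\star-\beta_0^\star)^\top T(x)$. Let $$\gamma(y\mid x)=\log\Big\{\frac{P(R=0\mid Y=y,X=x)\,P(R=1\mid Y=0,X=x)}{P(R=1\mid Y=y,X=x)\,P(R=0\mid Y=0,X=x)}\Big\}.$$ If $\gamma(1\mid x)=\gamma(1\mid x;\theta^\star)$ for all $x$, then for any function $\nu:\mathbb{R}^d\times\{0,1\}\to\mathbb{R}$, $$\frac{\mathbb{E}\big[R\big(\frac{1}{\eta_r(X,Y;\theta^\star)}-1\big)\nu(X,Y)\bigm| X\big]}{\mathbb{E}\big[R\big(\frac{1}{\eta_r(X,Y;\theta^\star)}-1\big)\bigm| X\big]}=\mathbb{E}[\nu(X,Y)\mid X,R=0].$$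
   Context: $R=1$ indicates that $Y$ is observed and $R=0$ that it is missing. *)

From mathcomp Require Import all_boot all_order all_algebra.
From mathcomp Require Import all_classical all_reals all_analysis.
Set Implicit Arguments. Unset Strict Implicit. Unset Printing Implicit Defensive.
Import Order.TTheory GRing.Theory Num.Theory.
Import numFieldNormedType.Exports.
Local Open Scope classical_set_scope.
Local Open Scope ring_scope.

Section Defs.
Variable R : realType.

Definition borelRd (d : nat) : set (set 'rV[R]_d) := <<s @open 'rV[R]_d >>.

Definition dotp (k : nat) (b v : 'rV[R]_k) : R := \sum_(i < k) b ord0 i * v ord0 i.

(* A (regular version of the) conditional pmf of (Y,R) given X = x:
   pYR x y r = P(Y = y, R = r | X = x). *)
Definition condR (d : nat) (pYR : 'rV[R]_d -> bool -> bool -> R) x y r :=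
  pYR x y r / (pYR x y false + pYR x y true).
Definition condY (d : nat) (pYR : 'rV[R]_d -> bool -> bool -> R) x y r :=
  pYR x y r / (pYR x false r + pYR x true r).

Definition condE_X (d : nat) (pYR : 'rV[R]_d -> bool -> bool -> R) x
  (f : 'rV[R]_d -> bool -> bool -> R) : R :=
  \sum_(y : bool) \sum_(r : bool) pYR x y r * f x y r.

Definition condE_XR (d : nat) (pYR : 'rV[R]_d -> bool -> bool -> R) x r
  (g : 'rV[R]_d -> bool -> R) : R :=
  \sum_(y : bool) condY pYR x y r * g x y.

Definition gamma_true (d : nat) (pYR : 'rV[R]_d -> bool -> bool -> R) x y : R :=
  ln ((condR pYR x y false * condR pYR x false true) /
      (condR pYR x y true * condR pYR x false false)).

Definition omega (d k : nat) (Tf : 'rV[R]_d -> 'rV[R]_k)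
  (a0 a1 : R) (b0 b1 : 'rV[R]_k) x (y : bool) : R :=
  expR ((if y then a1 else a0) + dotp (if y then b1 else b0) (Tf x)).

Definition eta_r (d k : nat) (pi1 : R) (Tf : 'rV[R]_d -> 'rV[R]_k)
  (a0 a1 : R) (b0 b1 : 'rV[R]_k) x y : R :=
  pi1 / (pi1 + omega Tf a0 a1 b0 b1 x y * (1 - pi1)).

Definition gamma_model (d k : nat) (Tf : 'rV[R]_d -> 'rV[R]_k)
  (a0 a1 : R) (b0 b1 : 'rV[R]_k) x : R :=
  (a1 - a0) + dotp (b1 - b0) (Tf x).

End Defs.

From mathcomp Require Import all_boot all_order all_algebra.
From mathcomp Require Import all_classical all_reals all_analysis.
From mathcomp Require Import ring.
Import Order.TTheory GRing.Theory Num.Theory.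
Import numFieldNormedType.Exports.
Local Open Scope classical_set_scope.
Local Open Scope ring_scope.

(* Since [1/eta_r - 1 = omega (1 - pi)/pi] and [omega(x,1)/omega(x,0)] is the
   odds ratio [exp gamma(1|x)], the weight [p(y,1|x) (1/eta_r(x,y) - 1)] is
   proportional, as a function of [y], to [p(y,0|x)]: reweighting the
   respondents by [1/eta_r - 1] reproduces the law of [Y] given [X] among the
   nonrespondents, and the constant of proportionality cancels in the ratio. *)

Section ConditionalPmf.
Variables (R : realType) (d : nat) (pYR : 'rV[R]_d -> bool -> bool -> R).

Lemma condR_gt0_pmf_gt0 x y r :
  (forall y' r', 0 <= pYR x y' r') -> 0 < condR pYR x y r -> 0 < pYR x y r.
Proof.
move=> pYR_ge0; rewrite [0 < pYR _ _ _]lt0r pYR_ge0 andbT /condR.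
by apply: contraTneq => ->; rewrite mul0r ltxx.
Qed.

Lemma condE_XR_ratio x r (nu : 'rV[R]_d -> bool -> R) :
  condE_XR pYR x r nu = (\sum_y pYR x y r * nu x y) / \sum_y pYR x y r.
Proof.
rewrite /condE_XR /condY !big_bool /= [pYR x false r + _]addrC.
by rewrite mulrDl !(mulrAC _ _^-1).
Qed.

Lemma condE_X_tilted_ratio x (w nu : 'rV[R]_d -> bool -> R) (c : R) :
  c != 0 -> (forall y, pYR x y true * w x y = c * pYR x y false) ->
  condE_X pYR x (fun x y r => r%:R * w x y * nu x y)
    / condE_X pYR x (fun x y r => r%:R * w x y)
  = condE_XR pYR x false nu.
Proof.
move=> c_neq0 tilt; rewrite condE_XR_ratio /condE_X !big_bool /=.
rewrite !(mul0r, mulr0, addr0, mul1r) !mulrA !tilt -!mulrA -!mulrDr.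
by rewrite invfM mulrACA divff // mul1r.
Qed.

Hypothesis pYR_gt0 : forall x y r, 0 < pYR x y r.

Lemma expR_gamma_true x y :
  expR (gamma_true pYR x y) =
  pYR x y false * pYR x false true / (pYR x y true * pYR x false false).
Proof.
have p_neq0 y' r : pYR x y' r != 0 by rewrite gt_eqF.
have s_neq0 y' : pYR x y' false + pYR x y' true != 0.
  by rewrite gt_eqF ?addr_gt0.
rewrite /gamma_true lnK; last first.
  by rewrite posrE /condR !(mulr_gt0, divr_gt0, invr_gt0, addr_gt0).
by rewrite /condR; field; rewrite !p_neq0 !s_neq0.
Qed.

End ConditionalPmf.

Lemma dotpBl (R : realType) (k : nat) (b b' v : 'rV[R]_k) :
  dotp (b - b') v = dotp b v - dotp b' v.
Proof. by rewrite /dotp -sumrB; apply: eq_bigr => i _; rewrite !mxE mulrBl. Qed.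

Section SelectionModel.
Variables (R : realType) (d k : nat) (Tf : 'rV[R]_d -> 'rV[R]_k).
Variables (a0 a1 : R) (b0 b1 : 'rV[R]_k).

Lemma omega_true x :
  omega Tf a0 a1 b0 b1 x true =
  omega Tf a0 a1 b0 b1 x false * expR (gamma_model Tf a0 a1 b0 b1 x).
Proof. by rewrite /omega /gamma_model -expRD dotpBl; congr expR; ring. Qed.

Lemma inv_eta_r_subr1 pi x y : pi != 0 ->
  (eta_r pi Tf a0 a1 b0 b1 x y)^-1 - 1 = omega Tf a0 a1 b0 b1 x y * ((1 - pi) / pi).
Proof. by move=> pi_neq0; rewrite /eta_r invf_div; field. Qed.

Lemma pmf_true_omega_tilt (pYR : 'rV[R]_d -> bool -> bool -> R) x :
  (forall x y r, 0 < pYR x y r) ->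
  gamma_true pYR x true = gamma_model Tf a0 a1 b0 b1 x ->
  forall y, pYR x y true * omega Tf a0 a1 b0 b1 x y =
    pYR x false true * omega Tf a0 a1 b0 b1 x false / pYR x false false
    * pYR x y false.
Proof.
move=> pYR_gt0 gamma_eq [|]; last by field; rewrite gt_eqF.
rewrite omega_true -gamma_eq expR_gamma_true //.
by field; rewrite !gt_eqF.
Qed.

End SelectionModel.

Theorem lemma11
  (dT : measure_display) (Ω : measurableType dT) (R : realType)
  (P : probability Ω R) (d k : nat)
  (X : Ω -> 'rV[R]_d) (Y Rv : Ω -> bool)
  (pYR : 'rV[R]_d -> bool -> bool -> R)
  (Tf : 'rV[R]_d -> 'rV[R]_k)
  (a0 a1 : R) (b0 b1 : 'rV[R]_k) :
  (* X is a random vector, Y and R are random bits *)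
  (forall B, borelRd B -> measurable (X @^-1` B)) ->
  measurable [set w | Y w] -> measurable [set w | Rv w] ->
  (* 0 < P(R = 1) < 1 *)
  (0 < fine (P [set w | Rv w]) < 1) ->
  (* pYR is a (regular) version of the conditional pmf of (Y,R) given X *)
  (forall x y r, 0 <= pYR x y r) ->
  (forall x, \sum_(y : bool) \sum_(r : bool) pYR x y r = 1) ->
  (forall B, borelRd B -> forall y r,
     P (X @^-1` B `&` [set w | Y w = y /\ Rv w = r]) =
     (\int[P]_(w in (X @^-1` B)) (pYR (X w) y r)%:E)%E) ->
  (* all conditional probabilities are well defined and in (0,1) *)
  (forall x y r, 0 < condR pYR x y r < 1 /\ 0 < condY pYR x y r < 1) ->
  (* T is measurable *)
  (forall B, borelRd B -> borelRd (Tf @^-1` B)) ->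
  (* gamma(1|x) = gamma(1|x; theta-star) for all x *)
  (forall x, gamma_true pYR x true = gamma_model Tf a0 a1 b0 b1 x) ->
  forall (nu : 'rV[R]_d -> bool -> R) (x : 'rV[R]_d),
    let eta := eta_r (fine (P [set w | Rv w])) Tf a0 a1 b0 b1 in
    condE_X pYR x (fun x y r => (r%:R) * ((eta x y)^-1 - 1) * nu x y)
      / condE_X pYR x (fun x y r => (r%:R) * ((eta x y)^-1 - 1))
    = condE_XR pYR x false nu.
Proof.
move=> _ _ _ /andP[pi_gt0 pi_lt1] pYR_ge0 _ _ cond_01 _ gamma_eq nu x /=.
have pYR_gt0 x' y r : 0 < pYR x' y r.
  by apply: condR_gt0_pmf_gt0 => //; have [/andP[]] := cond_01 x' y r.
have omega_gt0 y : 0 < omega Tf a0 a1 b0 b1 x y by exact: expR_gt0.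
set pi := fine _ in pi_gt0 pi_lt1 *.
apply: (@condE_X_tilted_ratio _ _ _ _ _ _
  (pYR x false true * omega Tf a0 a1 b0 b1 x false / pYR x false false
   * ((1 - pi) / pi))).
  by rewrite !(mulf_neq0, invr_neq0, gt_eqF, subr_gt0).
move=> y; rewrite inv_eta_r_subr1 ?gt_eqF // mulrA.
by rewrite pmf_true_omega_tilt // mulrAC.
Qed.
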